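(* Let $\theta,\eta\in\mathbb{R}$, $\gamma,\beta\in\mathbb{R}$. The inequality $\int_0^tu^{-\eta}[h^{-1}(1/u)]^{\gamma}(t-u)^{-\theta}[h^{-1}(1/(t-u))]^{\beta}\,du\le c\,t^{1-\eta-\theta}[h^{-1}(1/t)]^{\gamma+\beta}$ holds: (i) for all $t>0$, whenever $\beta,\gamma\ge0$, $\beta/2+1-\theta>0$ and $\gamma/2+1-\eta>0$, with $c=B(\beta/2+1-\theta,\gamma/2+1-\eta)$; (ii) if $h$ satisfies $h(r)\le C_h\lambda^{\alpha_h}h(\lambda r)$ for all $\lambda\le1$, $r\le1$ (some $\alpha_h\in(0,2]$, $C_h\ge1$), then for every $T>0$, all $t\in(0,T]$ and all $\beta,\gamma\in\mathbb{R}$ with $(\beta/2)\wedge(\beta/\alpha_h)+1-\theta>0$ and $(\gamma/2)\wedge(\gamma/\alpha_h)+1-\eta>0$, with $c=(C_h[h^{-1}(1/T)\vee1]^2)^{-(\beta\wedge0+\gamma\wedge0)/\alpha_h}\,B\big((\beta/2)\wedge(\beta/\alpha_h)+1-\theta,\,(\gamma/2)\wedge(\gamma/\alpha_h)+1-\eta\big)$.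
   Context: Let $d\in\mathbb{N}$ and let $\nu:[0,\infty)\to[0,\infty]$ be non-increasing with $\int_{\mathbb{R}^d}(1\wedge|x|^2)\nu(|x|)\,dx<\infty$. For $r>0$ let $h(r)=\int_{\mathbb{R}^d}\big(1\wedge \tfrac{|x|^2}{r^2}\big)\nu(|x|)\,dx$; assume $h(0^+)=\infty$, so $h$ is a continuous strictly decreasing bijection of $(0,\infty)$ onto $(0,\infty)$ with inverse $h^{-1}$. $B(a,b)=\int_0^1s^{a-1}(1-s)^{b-1}ds$ is the Beta function. *)

From Stdlib Require Import Reals Lra ClassicalEpsilon.
Open Scope R_scope.

Definition imp_int_ab (f : R -> R) (a b l : R) : Prop :=
  a < b /\
  (forall x y, a < x -> x <= y -> y < b -> inhabited (Riemann_integrable f x y)) /\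
  (forall eps, 0 < eps -> exists del, 0 < del /\
     forall x y (pr : Riemann_integrable f x y),
       a < x -> x < a + del -> b - del < y -> y < b -> x <= y ->
       Rabs (RiemannInt pr - l) < eps).

Definition imp_int_0inf (f : R -> R) (l : R) : Prop :=
  (forall x y, 0 < x -> x <= y -> inhabited (Riemann_integrable f x y)) /\
  (forall eps, 0 < eps -> exists del, 0 < del /\ exists M,
     forall x y (pr : Riemann_integrable f x y),
       0 < x -> x < del -> M < y -> x <= y ->
       Rabs (RiemannInt pr - l) < eps).

Definition Beta (a b : R) : R :=
  epsilon (inhabits 0)
    (fun l => imp_int_ab (fun s => Rpower s (a - 1) * Rpower (1 - s) (b - 1)) 0 1 l).

Fixpoint ball_vol (d : nat) : R :=
  match d with
  | O => 1
  | S O => 2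
  | S (S k as m) => 2 * PI / INR (S m) * ball_vol k
  end.

Definition sphere_area (d : nat) : R := INR d * ball_vol d.

(* h(r) = int_{R^d} (1 /\ |x|^2/r^2) nu(|x|) dx, written in polar coordinates:
   |S^{d-1}| * int_0^oo (1 /\ s^2/r^2) nu(s) s^(d-1) ds. *)
Definition hfun (d : nat) (nu : R -> R) (r : R) : R :=
  sphere_area d *
  epsilon (inhabits 0)
    (fun l => imp_int_0inf (fun s => Rmin 1 (s ^ 2 / r ^ 2) * nu s * s ^ (pred d)) l).

Definition hinv (d : nat) (nu : R -> R) (y : R) : R :=
  epsilon (inhabits 0) (fun r => 0 < r /\ hfun d nu r = y).

Definition conv_integrand (d : nat) (nu : R -> R) (theta eta gam bet t u : R) : R :=
  Rpower u (- eta) * Rpower (hinv d nu (1 / u)) gam *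
  Rpower (t - u) (- theta) * Rpower (hinv d nu (1 / (t - u))) bet.

From Stdlib Require Import Reals Lra Lia ClassicalEpsilon Classical RList Ranalysis5
  FunctionalExtensionality.
From Coquelicot Require Import Coquelicot.
Open Scope R_scope.

(* Since [h] is nonincreasing and [(r/r')^2 h(r) <= h(r')] for [r <= r'], we have
   [h^{-1}(1/u) <= (u/t)^(1/2) h^{-1}(1/t)] for [0 < u <= t]; under weak scaling also
   [h^{-1}(1/u) >= c (u/t)^(1/alpha) h^{-1}(1/t)] for [t <= T], with
   [c^(-alpha) = C_h (h^{-1}(1/T) \/ 1)^2].  Raising these bounds to the powers [gamma], [beta]
   (the upper one for nonnegative, the lower one for negative exponents) dominates the integrand
   by a constant times [u^(a-1) (t-u)^(b-1)], whose integral over (0,t) is [t^(a+b-1) B(b,a)]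
   by the substitution [u = t(1-s)].
   The inverse [h^{-1}] exists because [h] is continuous (locally Lipschitz, by the same
   inequality), blows up at 0 and tends to 0 at infinity (the tail of the defining integral
   is small).  The improper Riemann integrals exist since all integrands are nonnegative, of
   bounded variation on compact subintervals (products of monotone factors), with bounded
   partial integrals. *)

Lemma exp_le_exp x y : x <= y -> exp x <= exp y.
Proof.
  intros H; destruct (Rle_lt_or_eq_dec _ _ H) as [Hlt|<-]; [left; apply exp_increasing|]; lra.
Qed.

Lemma Rpower_pos x c : 0 < Rpower x c.
Proof. apply exp_pos. Qed.

Lemma ln_le_of_inv_le t v C E : 0 < t -> 0 < v -> 0 < C -> 1 / t <= C * exp E * (1 / v) ->
  ln v - ln t <= ln C + E.
Proof.
  intros Ht Hv HC H. unfold Rdiv in H. rewrite !Rmult_1_l in H.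
  assert (0 < / t) by (apply Rinv_0_lt_compat; lra).
  assert (0 < / v) by (apply Rinv_0_lt_compat; lra).
  assert (0 < exp E) by apply exp_pos.
  apply ln_le in H; [|lra].
  rewrite !ln_mult, ln_exp, !ln_Rinv in H by (try apply Rmult_lt_0_compat; lra). lra.
Qed.

(** The exponent [Rmin (g/2) (g/alpha)] selects the upper bound [x <= h + D/2] when [g >= 0] and
    the lower bound [alpha x >= alpha h + D - lC] when [g < 0]. *)
Lemma exponent_select alpha g x h D lC : 0 < alpha -> alpha <= 2 ->
  2 * x <= 2 * h + D -> alpha * h + D - lC <= alpha * x ->
  g * x <= g * h + Rmin (g / 2) (g / alpha) * D - (Rmin g 0 / alpha) * lC.
Proof.
  intros Ha1 Ha2 H1 H2.
  assert (Hinv : / 2 <= / alpha) by (apply Rinv_le_contravar; lra).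
  destruct (Rle_lt_dec 0 g) as [Hg|Hg].
  - rewrite Rmin_left, (Rmin_right g 0) by (unfold Rdiv; try apply Rmult_le_compat_l; lra).
    unfold Rdiv at 2. rewrite Rmult_0_l. nra.
  - rewrite Rmin_right, (Rmin_left g 0) by (unfold Rdiv; try apply Rmult_le_compat_neg_l; lra).
    set (q := g / alpha). assert (Eg : g = q * alpha) by (unfold q; field; lra).
    assert (Hq : q < 0) by (unfold q, Rdiv; apply Rmult_neg_pos; [|apply Rinv_0_lt_compat]; lra).
    rewrite Eg. nra.
Qed.

Lemma Rpower_le_1 x c : 0 < x <= 1 -> 0 <= c -> Rpower x c <= 1.
Proof.
  intros Hx Hc. unfold Rpower. rewrite <- exp_0. apply exp_le_exp.
  assert (ln x <= 0) by (rewrite <- ln_1; apply ln_le; lra). nra.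
Qed.

Lemma Rpower_le_on_half z c : / 2 <= z <= 1 -> Rpower z c <= Rmax 1 (Rpower (/ 2) c).
Proof.
  intros Hz. unfold Rpower.
  assert (ln (/ 2) <= ln z) by (apply ln_le; lra).
  assert (ln z <= 0) by (rewrite <- ln_1; apply ln_le; lra).
  destruct (Rle_lt_dec 0 c).
  - eapply Rle_trans; [|apply Rmax_l]. rewrite <- exp_0. apply exp_le_exp. nra.
  - eapply Rle_trans; [|apply Rmax_r]. apply exp_le_exp. nra.
Qed.

Lemma continuity_pt_local_lipschitz f x0 del K : 0 < del -> 0 <= K ->
  (forall x, Rabs (x - x0) < del -> Rabs (f x - f x0) <= K * Rabs (x - x0)) ->
  continuity_pt f x0.
Proof.
  intros Hdel HK Hl eps Heps. exists (Rmin del (eps / (K + 1))). split.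
  - apply Rmin_pos; [lra | apply Rdiv_lt_0_compat; lra].
  - intros x [_ Hx]. simpl in *. unfold R_dist in *.
    assert (H1 := Rmin_l del (eps / (K + 1))). assert (H2 := Rmin_r del (eps / (K + 1))).
    assert (Habs := Rabs_pos (x - x0)).
    eapply Rle_lt_trans; [apply Hl; lra|].
    apply Rle_lt_trans with ((K + 1) * Rabs (x - x0)); [nra|].
    replace eps with ((K + 1) * (eps / (K + 1))) by (field; lra).
    apply Rmult_lt_compat_l; lra.
Qed.

(** * Functions of bounded variation *)

Definition variation_le (f G : R -> R) (a b : R) : Prop :=
  forall s u, a <= s -> s <= u -> u <= b -> Rabs (f u - f s) <= G u - G s.

Definition has_bounded_variation (f : R -> R) (a b : R) : Prop :=
  exists G, variation_le f G a b.

Definition nondecreasing_on (f : R -> R) (a b : R) : Prop :=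
  forall s u, a <= s -> s <= u -> u <= b -> f s <= f u.

Lemma variation_le_sub f G a b a' b' :
  variation_le f G a b -> a <= a' -> b' <= b -> variation_le f G a' b'.
Proof. intros HG Ha Hb s u Hs Hsu Hu; apply HG; lra. Qed.

Definition step_approx (f : R -> R) (a b e : R) : Type :=
  {phi : StepFun a b & {psi : StepFun a b |
     (forall t, a <= t <= b -> Rabs (f t - phi t) <= psi t) /\ RiemannInt_SF psi <= e}}.

Lemma step_approx_weaken f a b e e' : step_approx f a b e -> e <= e' -> step_approx f a b e'.
Proof. intros [phi [psi [H1 H2]]] He. exists phi, psi; split; auto; lra. Qed.

Lemma adapted_couple_ext f g a b l lf : a <= b -> adapted_couple f a b l lf ->
  (forall x, a < x < b -> f x = g x) -> adapted_couple g a b l lf.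
Proof.
  intros Hab [Hord [H0 [H1 [Hlen Hc]]]] Heq.
  repeat split; auto.
  intros i Hi x Hx.
  rewrite <- (Hc i Hi x Hx). symmetry; apply Heq.
  unfold open_interval in Hx.
  rewrite Rmin_left in H0 by lra. rewrite Rmax_right in H1 by lra.
  assert (A1 : pos_Rl l 0 <= pos_Rl l i).
  { apply RList_P5; auto. apply RList_P3. exists i; split; auto. lia. }
  assert (A2 : pos_Rl l (S i) <= pos_Rl l (pred (length l))).
  { apply RList_P7; auto. apply RList_P3. exists (S i); split; auto. lia. }
  lra.
Qed.

Lemma IsStepFun_ext f g a b : a <= b -> IsStepFun f a b ->
  (forall x, a < x < b -> f x = g x) -> IsStepFun g a b.
Proof.
  intros Hab [l [lf H]] Heq. exists l, lf. eapply adapted_couple_ext; eauto.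
Qed.

Definition glue (b : R) (p q : R -> R) (x : R) : R :=
  if Rle_dec x b then p x else q x.

Lemma IsStepFun_glue a b c (p : StepFun a b) (q : StepFun b c) :
  a <= b -> b <= c ->
  {pr1 : IsStepFun (glue b p q) a b & {pr2 : IsStepFun (glue b p q) b c &
    IsStepFun (glue b p q) a c}}.
Proof.
  intros Hab Hbc.
  assert (pr1 : IsStepFun (glue b p q) a b).
  { apply (IsStepFun_ext p); auto. apply pre. intros x Hx; unfold glue.
    destruct (Rle_dec x b); auto; lra. }
  assert (pr2 : IsStepFun (glue b p q) b c).
  { apply (IsStepFun_ext q); auto. apply pre. intros x Hx; unfold glue.
    destruct (Rle_dec x b); auto; lra. }
  exists pr1, pr2. eapply StepFun_P46; eauto.
Qed.

Lemma step_approx_concat f a b c e1 e2 : a <= b -> b <= c ->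
  step_approx f a b e1 -> step_approx f b c e2 -> step_approx f a c (e1 + e2).
Proof.
  intros Hab Hbc [phi1 [psi1 [A1 B1]]] [phi2 [psi2 [A2 B2]]].
  destruct (IsStepFun_glue a b c phi1 phi2 Hab Hbc) as [p1 [p2 p3]].
  destruct (IsStepFun_glue a b c psi1 psi2 Hab Hbc) as [q1 [q2 q3]].
  exists (mkStepFun p3), (mkStepFun q3). split.
  - intros t Ht; simpl; unfold glue. destruct (Rle_dec t b).
    + apply A1; lra.
    + apply A2; lra.
  - rewrite <- (StepFun_P43 q1 q2 q3).
    assert (I1 : RiemannInt_SF (mkStepFun q1) <= RiemannInt_SF psi1).
    { apply StepFun_P37; auto. intros x Hx; simpl; unfold glue.
      destruct (Rle_dec x b); lra. }
    assert (I2 : RiemannInt_SF (mkStepFun q2) <= RiemannInt_SF psi2).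
    { apply StepFun_P37; auto. intros x Hx; simpl; unfold glue.
      destruct (Rle_dec x b); lra. }
    lra.
Qed.

Lemma step_approx_const f G a b : a <= b -> variation_le f G a b ->
  step_approx f a b ((b - a) * (G b - G a)).
Proof.
  intros Hab HG.
  exists (mkStepFun (StepFun_P4 a b (f a))), (mkStepFun (StepFun_P4 a b (G b - G a))).
  split.
  - intros t Ht; simpl; unfold fct_cte.
    assert (X1 := HG a t (Rle_refl a) (proj1 Ht) (proj2 Ht)).
    assert (X2 := HG t b (proj1 Ht) (proj2 Ht) (Rle_refl b)).
    assert (X3 := Rabs_pos (f b - f t)). lra.
  - rewrite StepFun_P18. right; ring.
Qed.

(** On [n+1] cells of width [d] the errors [d * (increase of G on a cell)] telescope. *)
Lemma step_approx_uniform f G n a d : 0 <= d -> variation_le f G a (a + INR (S n) * d) ->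
  step_approx f a (a + INR (S n) * d) (d * (G (a + INR (S n) * d) - G a)).
Proof.
  revert a; induction n as [|n IH]; intros a Hd HG.
  - eapply step_approx_weaken.
    + apply step_approx_const; [simpl; lra | exact HG].
    + simpl; right; ring.
  - assert (Hb : a + d + INR (S n) * d = a + INR (S (S n)) * d) by (rewrite (S_INR (S n)); ring).
    assert (Hn := pos_INR (S n)).
    assert (X1 : step_approx f a (a + d) (d * (G (a + d) - G a))).
    { eapply step_approx_weaken.
      - apply step_approx_const; [lra|].
        eapply variation_le_sub; [exact HG | lra | rewrite S_INR; nra].
      - right; ring. }
    assert (X2 : step_approx f (a + d) (a + INR (S (S n)) * d)
                  (d * (G (a + INR (S (S n)) * d) - G (a + d)))).
    { rewrite <- Hb. apply IH; [exact Hd|]. rewrite Hb. eapply variation_le_sub; eauto; lra. }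
    eapply step_approx_weaken.
    + apply (step_approx_concat f a (a + d)); [lra | rewrite <- Hb; nra | exact X1 | exact X2].
    + right; ring.
Qed.

Lemma variation_le_integrable f G a b : a < b -> variation_le f G a b -> Riemann_integrable f a b.
Proof.
  intros Hab HG eps.
  set (D := G b - G a).
  assert (HD : 0 <= D).
  { unfold D; assert (X := HG a b (Rle_refl a) (Rlt_le _ _ Hab) (Rle_refl b)).
    assert (Y := Rabs_pos (f b - f a)); lra. }
  assert (He : 0 < eps / ((b - a) * (D + 1))).
  { apply Rdiv_lt_0_compat. apply cond_pos. apply Rmult_lt_0_compat; lra. }
  destruct (constructive_indefinite_description _ (archimed_cor1 _ He)) as [N [HN1 HN2]].
  destruct N as [|n]; [lia|].
  set (d := (b - a) / INR (S n)).
  assert (HSn : 0 < INR (S n)) by (apply lt_0_INR; lia).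
  assert (Hd : 0 <= d) by (unfold d; apply Rlt_le, Rdiv_lt_0_compat; lra).
  assert (Hbd : a + INR (S n) * d = b) by (unfold d; field; lra).
  assert (X := step_approx_uniform f G n a d Hd).
  rewrite Hbd in X. destruct (X HG) as [phi [psi [A B]]].
  exists phi, psi. rewrite Rmin_left, Rmax_right by lra. split; [exact A|].
  assert (P0 : 0 <= RiemannInt_SF psi).
  { rewrite <- (Rmult_0_l (b - a)). rewrite <- (StepFun_P18 a b 0).
    apply StepFun_P37; [lra|]. intros x Hx; simpl; unfold fct_cte.
    eapply Rle_trans; [apply Rabs_pos | apply A; lra]. }
  rewrite Rabs_right by lra.
  apply Rle_lt_trans with (d * D); [exact B|].
  assert (Q : d * D < eps / ((b - a) * (D + 1)) * ((b - a) * (D + 1))).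
  { apply Rle_lt_trans with (/ INR (S n) * ((b - a) * (D + 1))).
    - unfold d, Rdiv. assert (0 < / INR (S n)) by (apply Rinv_0_lt_compat; lra). nra.
    - apply Rmult_lt_compat_r; [apply Rmult_lt_0_compat|]; lra. }
  replace (eps / ((b - a) * (D + 1)) * ((b - a) * (D + 1))) with (pos eps) in Q
    by (field; split; lra).
  exact Q.
Qed.

Lemma bounded_variation_integrable f a b :
  a <= b -> has_bounded_variation f a b -> inhabited (Riemann_integrable f a b).
Proof.
  intros Hab [G HG]. destruct (Rle_lt_or_eq_dec _ _ Hab) as [H|<-].
  - constructor; eapply variation_le_integrable; eauto.
  - constructor; apply RiemannInt_P7.
Qed.

Lemma bounded_variation_ext f g a b :
  has_bounded_variation f a b -> (forall s, a <= s <= b -> f s = g s) ->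
  has_bounded_variation g a b.
Proof.
  intros [G HG] E. exists G. intros s u Hs Hsu Hu. rewrite <- !E by lra. apply HG; auto.
Qed.

Lemma bounded_variation_bounded f a b : a <= b -> has_bounded_variation f a b ->
  exists K, forall s, a <= s <= b -> Rabs (f s) <= K.
Proof.
  intros Hab [G HG]. exists (Rabs (f a) + (G b - G a)). intros s Hs.
  assert (X1 := HG a s (Rle_refl a) (proj1 Hs) (proj2 Hs)).
  assert (X2 := HG s b (proj1 Hs) (proj2 Hs) (Rle_refl b)).
  assert (X3 := Rabs_pos (f b - f s)).
  assert (X4 := Rabs_triang_inv (f s) (f a)). lra.
Qed.

Lemma bounded_variation_mult f g a b : a <= b ->
  has_bounded_variation f a b -> has_bounded_variation g a b ->
  has_bounded_variation (fun x => f x * g x) a b.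
Proof.
  intros Hab Tf Tg.
  destruct (bounded_variation_bounded f a b Hab Tf) as [K Kf].
  destruct (bounded_variation_bounded g a b Hab Tg) as [L Lg].
  destruct Tf as [Gf Hf]. destruct Tg as [Gg Hg].
  exists (fun x => Rabs K * Gg x + Rabs L * Gf x). intros s u Hs Hsu Hu.
  replace (f u * g u - f s * g s) with (f u * (g u - g s) + g s * (f u - f s)) by ring.
  eapply Rle_trans; [apply Rabs_triang|]. rewrite !Rabs_mult.
  assert (B1 : Rabs (f u) <= Rabs K) by (eapply Rle_trans; [apply Kf; lra | apply RRle_abs]).
  assert (B2 : Rabs (g s) <= Rabs L) by (eapply Rle_trans; [apply Lg; lra | apply RRle_abs]).
  assert (Rabs (f u) * Rabs (g u - g s) <= Rabs K * (Gg u - Gg s))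
    by (apply Rmult_le_compat; auto using Rabs_pos).
  assert (Rabs (g s) * Rabs (f u - f s) <= Rabs L * (Gf u - Gf s))
    by (apply Rmult_le_compat; auto using Rabs_pos).
  lra.
Qed.

Lemma nondecreasing_bounded_variation f a b : nondecreasing_on f a b -> has_bounded_variation f a b.
Proof.
  intros H. exists f. intros s u Hs Hsu Hu.
  assert (X := H s u Hs Hsu Hu). rewrite Rabs_right; lra.
Qed.

Lemma exp_scal_bounded_variation phi c a b :
  nondecreasing_on phi a b -> has_bounded_variation (fun x => exp (c * phi x)) a b.
Proof.
  intros H. destruct (Rle_lt_dec 0 c) as [Hc|Hc].
  - apply nondecreasing_bounded_variation. intros s u Hs Hsu Hu.
    apply exp_le_exp. apply Rmult_le_compat_l; auto.
  - exists (fun x => - exp (c * phi x)). intros s u Hs Hsu Hu.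
    assert (exp (c * phi u) <= exp (c * phi s)).
    { apply exp_le_exp. assert (X := H s u Hs Hsu Hu). nra. }
    rewrite Rabs_left1; lra.
Qed.

Lemma Rpower_nondecreasing_bounded_variation phi c a b :
  (forall x, a <= x <= b -> 0 < phi x) -> nondecreasing_on phi a b ->
  has_bounded_variation (fun x => Rpower (phi x) c) a b.
Proof.
  intros Hpos H. apply (exp_scal_bounded_variation (fun x => ln (phi x))).
  intros s u Hs Hsu Hu. apply ln_le; [apply Hpos; lra | apply H; auto].
Qed.

Lemma Rpower_nonincreasing_bounded_variation phi c a b :
  (forall x, a <= x <= b -> 0 < phi x) -> nondecreasing_on (fun x => - phi x) a b ->
  has_bounded_variation (fun x => Rpower (phi x) c) a b.
Proof.
  intros Hpos H.
  apply (bounded_variation_ext (fun x => exp (- c * - ln (phi x)))).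
  - apply (exp_scal_bounded_variation (fun x => - ln (phi x))).
    intros s u Hs Hsu Hu. assert (X := H s u Hs Hsu Hu).
    assert (ln (phi u) <= ln (phi s)) by (apply ln_le; [apply Hpos; lra | lra]). lra.
  - intros s _. unfold Rpower. f_equal. ring.
Qed.

(** * Proper and improper integrals of nonnegative functions *)

Lemma RiemannInt_ge0 f a b (pr : Riemann_integrable f a b) :
  a <= b -> (forall x, a < x < b -> 0 <= f x) -> 0 <= RiemannInt pr.
Proof.
  intros Hab H.
  rewrite <- (Rmult_0_l (b - a)), <- (RiemannInt_P15 (RiemannInt_P14 a b 0)).
  apply RiemannInt_P19; [exact Hab|]. intros x Hx; apply H; exact Hx.
Qed.

Lemma RiemannInt_le_enlarge f a' a b b'
  (pr : Riemann_integrable f a b) (pr' : Riemann_integrable f a' b') :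
  a' <= a -> a <= b -> b <= b' ->
  inhabited (Riemann_integrable f a' a) -> inhabited (Riemann_integrable f b b') ->
  (forall x, a' < x < b' -> 0 <= f x) -> RiemannInt pr <= RiemannInt pr'.
Proof.
  intros H1 H2 H3 [p1] [p2] Hpos.
  set (p3 := RiemannInt_P24 p1 pr).
  assert (E1 := RiemannInt_P26 p1 pr p3).
  assert (E2 := RiemannInt_P26 p3 p2 pr').
  assert (N1 := RiemannInt_ge0 f a' a p1 H1 (fun x Hx => Hpos x ltac:(lra))).
  assert (N2 := RiemannInt_ge0 f b b' p2 H3 (fun x Hx => Hpos x ltac:(lra))).
  lra.
Qed.

Lemma RiemannInt_le_scal f g a b c
  (prf : Riemann_integrable f a b) (prg : Riemann_integrable g a b) :
  a <= b -> (forall x, a < x < b -> f x <= c * g x) -> RiemannInt prf <= c * RiemannInt prg.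
Proof.
  intros Hab H.
  rewrite <- (RInt_Reals f a b prf), <- (RInt_Reals g a b prg).
  assert (Eg := ex_RInt_Reals_1 _ _ _ prg).
  rewrite <- (RInt_scal (V := R_CompleteNormedModule)) by exact Eg.
  apply RInt_le; [exact Hab | apply (ex_RInt_Reals_1 _ _ _ prf)
                 | apply (ex_RInt_scal (V := R_NormedModule)); exact Eg | exact H].
Qed.

Lemma sup_approx (E : R -> Prop) M : (forall v, E v -> v <= M) -> (exists v, E v) ->
  exists l, (forall v, E v -> v <= l) /\ l <= M /\
    forall eps, 0 < eps -> exists v, E v /\ l - eps < v.
Proof.
  intros HM HE. destruct (completeness E (ex_intro _ M HM) HE) as [l [Hub Hlub]].
  exists l. split; [exact Hub|]. split; [apply Hlub; exact HM|].
  intros eps Heps. apply NNPP. intros Hn.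
  assert (l <= l - eps); [|lra].
  apply Hlub. intros v Ev. apply Rnot_lt_le. intros Hv. apply Hn. exists v; auto.
Qed.

(** The improper integral is the supremum of the integrals over compact subintervals. *)
Lemma imp_int_ab_of_bounded f a b M : a < b ->
  (forall x y, a < x -> x <= y -> y < b -> inhabited (Riemann_integrable f x y)) ->
  (forall x, a < x < b -> 0 <= f x) ->
  (forall x y (pr : Riemann_integrable f x y), a < x -> x <= y -> y < b -> RiemannInt pr <= M) ->
  exists l, imp_int_ab f a b l /\ l <= M.
Proof.
  intros Hab Hint Hpos HM.
  destruct (sup_approx
    (fun v => exists x y (pr : Riemann_integrable f x y),
       a < x /\ x <= y /\ y < b /\ v = RiemannInt pr) M)
    as [l [Hub [HlM Happ]]].
  - intros v (x & y & pr & ? & ? & ? & ->). apply HM; auto.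
  - destruct (Hint ((a + b) / 2) ((a + b) / 2)) as [pr]; try lra.
    exists (RiemannInt pr), ((a + b) / 2), ((a + b) / 2), pr. repeat split; lra.
  - exists l. split; [|exact HlM]. split; [exact Hab|]. split; [exact Hint|].
    intros eps Heps. destruct (Happ eps Heps) as [v [(x0 & y0 & pr0 & ? & ? & ? & ->) Hv]].
    exists (Rmin (x0 - a) (b - y0)). split; [apply Rmin_pos; lra|].
    intros x y pr Hx1 Hx2 Hy1 Hy2 Hxy.
    assert (Hm1 := Rmin_l (x0 - a) (b - y0)). assert (Hm2 := Rmin_r (x0 - a) (b - y0)).
    assert (RiemannInt pr0 <= RiemannInt pr).
    { apply RiemannInt_le_enlarge; try lra; try (apply Hint; lra). intros; apply Hpos; lra. }
    assert (RiemannInt pr <= l) by (apply Hub; exists x, y, pr; repeat split; lra).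
    rewrite Rabs_left1; lra.
Qed.

Lemma imp_int_0inf_of_bounded f M :
  (forall x y, 0 < x -> x <= y -> inhabited (Riemann_integrable f x y)) ->
  (forall x, 0 < x -> 0 <= f x) ->
  (forall x y (pr : Riemann_integrable f x y), 0 < x -> x <= y -> RiemannInt pr <= M) ->
  exists l, imp_int_0inf f l /\ l <= M.
Proof.
  intros Hint Hpos HM.
  destruct (sup_approx
    (fun v => exists x y (pr : Riemann_integrable f x y), 0 < x /\ x <= y /\ v = RiemannInt pr) M)
    as [l [Hub [HlM Happ]]].
  - intros v (x & y & pr & ? & ? & ->). apply HM; auto.
  - destruct (Hint 1 1) as [pr]; try lra.
    exists (RiemannInt pr), 1, 1, pr. repeat split; lra.
  - exists l. split; [|exact HlM]. split; [exact Hint|].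
    intros eps Heps. destruct (Happ eps Heps) as [v [(x0 & y0 & pr0 & ? & ? & ->) Hv]].
    exists x0. split; [lra|]. exists y0.
    intros x y pr Hx1 Hx2 Hy Hxy.
    assert (RiemannInt pr0 <= RiemannInt pr).
    { apply RiemannInt_le_enlarge; try lra; try (apply Hint; lra). intros; apply Hpos; lra. }
    assert (RiemannInt pr <= l) by (apply Hub; exists x, y, pr; repeat split; lra).
    rewrite Rabs_left1; lra.
Qed.

Lemma imp_int_ab_partial_le f a b l : (forall x, a < x < b -> 0 <= f x) -> imp_int_ab f a b l ->
  forall x y (pr : Riemann_integrable f x y), a < x -> x <= y -> y < b -> RiemannInt pr <= l.
Proof.
  intros Hpos [Hab [Hint Hl]] x y pr Hx Hxy Hy.
  apply Rnot_lt_le. intros Hc.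
  destruct (Hl (RiemannInt pr - l)) as [del [Hdel Hd]]; [lra|].
  set (x' := Rmin x (a + del / 2)). set (y' := Rmax y (b - del / 2)).
  assert (Hx1 := Rmin_l x (a + del / 2)). assert (Hx2 := Rmin_r x (a + del / 2)).
  assert (Hy1 := Rmax_l y (b - del / 2)). assert (Hy2 := Rmax_r y (b - del / 2)).
  assert (Hx3 : a < x') by (unfold x', Rmin; destruct Rle_dec; lra).
  assert (Hy3 : y' < b) by (unfold y', Rmax; destruct Rle_dec; lra).
  fold x' y' in Hx1, Hx2, Hy1, Hy2.
  destruct (Hint x' y') as [pr']; try lra.
  assert (RiemannInt pr <= RiemannInt pr').
  { apply RiemannInt_le_enlarge; try lra; try (apply Hint; lra). intros; apply Hpos; lra. }
  assert (X := Hd x' y' pr' Hx3 ltac:(lra) ltac:(lra) Hy3 ltac:(lra)).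
  apply Rabs_def2 in X. lra.
Qed.

Lemma imp_int_0inf_partial_le f l : (forall x, 0 < x -> 0 <= f x) -> imp_int_0inf f l ->
  forall x y (pr : Riemann_integrable f x y), 0 < x -> x <= y -> RiemannInt pr <= l.
Proof.
  intros Hpos [Hint Hl] x y pr Hx Hxy.
  apply Rnot_lt_le. intros Hc.
  destruct (Hl (RiemannInt pr - l)) as [del [Hdel [M Hd]]]; [lra|].
  set (x' := Rmin x (del / 2)). set (y' := Rmax y (M + 1)).
  assert (Hx1 := Rmin_l x (del / 2)). assert (Hx2 := Rmin_r x (del / 2)).
  assert (Hy1 := Rmax_l y (M + 1)). assert (Hy2 := Rmax_r y (M + 1)).
  assert (Hx3 : 0 < x') by (unfold x', Rmin; destruct Rle_dec; lra).
  fold x' y' in Hx1, Hx2, Hy1, Hy2.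
  destruct (Hint x' y') as [pr']; try lra.
  assert (RiemannInt pr <= RiemannInt pr').
  { apply RiemannInt_le_enlarge; try lra; try (apply Hint; lra). intros; apply Hpos; lra. }
  assert (X := Hd x' y' pr' Hx3 ltac:(lra) ltac:(lra) ltac:(lra)).
  apply Rabs_def2 in X. lra.
Qed.

Lemma imp_int_0inf_le_of_partial_le f l M : imp_int_0inf f l ->
  (forall x y (pr : Riemann_integrable f x y), 0 < x -> x <= y -> RiemannInt pr <= M) -> l <= M.
Proof.
  intros [Hint Hl] HM. apply Rnot_lt_le. intros Hc.
  destruct (Hl (l - M)) as [del [Hdel [M0 Hd]]]; [lra|].
  set (y := Rmax (del / 2) (M0 + 1)).
  assert (Hy1 : del / 2 <= y) by apply Rmax_l. assert (Hy2 : M0 + 1 <= y) by apply Rmax_r.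
  assert (Hi : inhabited (Riemann_integrable f (del / 2) y)) by (apply Hint; lra).
  destruct Hi as [pr].
  assert (X := Hd _ _ pr ltac:(lra) ltac:(lra) ltac:(lra) ltac:(lra)).
  assert (HM' := HM _ _ pr ltac:(lra) ltac:(lra)).
  apply Rabs_def2 in X. lra.
Qed.

Lemma imp_int_0inf_ge0 f l : (forall x, 0 < x -> 0 <= f x) -> imp_int_0inf f l -> 0 <= l.
Proof.
  intros Hpos Hl. destruct (proj1 Hl 1 1) as [pr]; try lra.
  apply Rle_trans with (RiemannInt pr).
  - apply RiemannInt_ge0; [lra|]. intros; apply Hpos; lra.
  - apply (imp_int_0inf_partial_le f l Hpos Hl); lra.
Qed.

Lemma imp_int_0inf_partial_le_scal f g c lg : 0 <= c ->
  (forall s, 0 < s -> f s <= c * g s) -> (forall s, 0 < s -> 0 <= g s) -> imp_int_0inf g lg ->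
  forall x y (pr : Riemann_integrable f x y), 0 < x -> x <= y -> RiemannInt pr <= c * lg.
Proof.
  intros Hc Hfg Hg Hlg x y pr Hx Hxy.
  destruct (proj1 Hlg x y Hx Hxy) as [prg].
  apply Rle_trans with (c * RiemannInt prg).
  - apply RiemannInt_le_scal; [exact Hxy|]. intros s Hs; apply Hfg; lra.
  - apply Rmult_le_compat_l; [exact Hc|]. apply (imp_int_0inf_partial_le g); auto.
Qed.

Lemma imp_int_0inf_le_scal f g c lf lg : 0 <= c ->
  (forall s, 0 < s -> f s <= c * g s) -> (forall s, 0 < s -> 0 <= g s) ->
  imp_int_0inf f lf -> imp_int_0inf g lg -> lf <= c * lg.
Proof.
  intros Hc Hfg Hg Hlf Hlg. apply (imp_int_0inf_le_of_partial_le f lf _ Hlf).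
  apply (imp_int_0inf_partial_le_scal f g); auto.
Qed.

Lemma imp_int_0inf_tail f l : (forall x, 0 < x -> 0 <= f x) -> imp_int_0inf f l ->
  forall eps, 0 < eps -> exists M, forall A y (pr : Riemann_integrable f A y),
    M < A -> A <= y -> RiemannInt pr < eps.
Proof.
  intros Hpos [Hint Hl] eps Heps.
  destruct (Hl (eps / 2)) as [del [Hdel [M Hd]]]; [lra|].
  exists (Rmax M (del / 2)). intros A y pr HA Hy.
  assert (HM1 := Rmax_l M (del / 2)). assert (HM2 := Rmax_r M (del / 2)).
  assert (Hi1 : inhabited (Riemann_integrable f (del / 4) A)) by (apply Hint; lra).
  destruct Hi1 as [p1].
  assert (Hi2 : inhabited (Riemann_integrable f (del / 4) y)) by (apply Hint; lra).
  destruct Hi2 as [p2].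
  assert (E := RiemannInt_P26 p1 pr p2).
  assert (X1 := Hd _ _ p1 ltac:(lra) ltac:(lra) ltac:(lra) ltac:(lra)).
  assert (X2 := Hd _ _ p2 ltac:(lra) ltac:(lra) ltac:(lra) ltac:(lra)).
  apply Rabs_def2 in X1. apply Rabs_def2 in X2. lra.
Qed.

(** * The Beta integral and the convolution kernel *)

Lemma is_derive_Rpower c s : 0 < s -> is_derive (fun u => Rpower u c) s (c * Rpower s (c - 1)).
Proof. intros Hs. apply is_derive_Reals, derivable_pt_lim_power; exact Hs. Qed.

Lemma is_derive_Rpower_compl c s : s < 1 ->
  is_derive (fun u => Rpower (1 - u) c) s (- (c * Rpower (1 - s) (c - 1))).
Proof.
  intros Hs.
  replace (- (c * Rpower (1 - s) (c - 1))) with (scal (-1) (c * Rpower (1 - s) (c - 1)))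
    by (unfold scal; simpl; unfold mult; simpl; ring).
  apply (is_derive_comp (fun v => Rpower v c) (fun u => 1 - u)).
  - apply is_derive_Rpower; lra.
  - auto_derive; [exact I | ring].
Qed.

Lemma is_RInt_Rpower p x y : 0 < p -> 0 < x -> x <= y ->
  is_RInt (fun s => Rpower s (p - 1)) x y (/ p * Rpower y p - / p * Rpower x p).
Proof.
  intros Hp Hx Hxy.
  apply (is_RInt_derive (fun u => / p * Rpower u p)); rewrite Rmin_left, Rmax_right by lra;
    intros z Hz.
  - replace (Rpower z (p - 1)) with (/ p * (p * Rpower z (p - 1))) by (field; lra).
    apply is_derive_scal, is_derive_Rpower; lra.
  - apply (ex_derive_continuous (V := R_NormedModule) (fun s => Rpower s (p - 1))).
    exists ((p - 1) * Rpower z (p - 1 - 1)).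
    apply is_derive_Rpower; lra.
Qed.

Lemma is_RInt_Rpower_compl q x y : 0 < q -> x <= y -> y < 1 ->
  is_RInt (fun s => Rpower (1 - s) (q - 1)) x y (/ q * Rpower (1 - x) q - / q * Rpower (1 - y) q).
Proof.
  intros Hq Hxy Hy.
  replace (/ q * Rpower (1 - x) q - / q * Rpower (1 - y) q)
    with (minus (- / q * Rpower (1 - y) q) (- / q * Rpower (1 - x) q))
    by (unfold minus, plus, opp; simpl; ring).
  apply (is_RInt_derive (fun u => - / q * Rpower (1 - u) q)); rewrite Rmin_left, Rmax_right by lra;
    intros z Hz.
  - replace (Rpower (1 - z) (q - 1)) with (- / q * - (q * Rpower (1 - z) (q - 1))) by (field; lra).
    apply is_derive_scal, is_derive_Rpower_compl; lra.
  - apply (ex_derive_continuous (V := R_NormedModule) (fun s => Rpower (1 - s) (q - 1))).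
    exists (- ((q - 1) * Rpower (1 - z) (q - 1 - 1))).
    apply is_derive_Rpower_compl; lra.
Qed.

Definition beta_density (p q s : R) : R := Rpower s (p - 1) * Rpower (1 - s) (q - 1).

Lemma beta_density_pos p q s : 0 < beta_density p q s.
Proof. apply Rmult_lt_0_compat; apply Rpower_pos. Qed.

Lemma beta_density_bounded_variation p q x y : 0 < x -> x <= y -> y < 1 ->
  has_bounded_variation (beta_density p q) x y.
Proof.
  intros Hx Hxy Hy. apply bounded_variation_mult; [exact Hxy| |].
  - apply (Rpower_nondecreasing_bounded_variation (fun s => s)); [intros; lra|].
    intros s u Hs Hsu Hu; lra.
  - apply (Rpower_nonincreasing_bounded_variation (fun s => 1 - s)); [intros; lra|].
    intros s u Hs Hsu Hu; lra.
Qed.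

(** On [(0,1/2]] the factor [(1-s)^(q-1)] is bounded, on [[1/2,1)] the factor [s^(p-1)]. *)
Lemma beta_density_le p q s : 0 < s < 1 ->
  beta_density p q s <= Rmax 1 (Rpower (/ 2) (q - 1)) * Rpower s (p - 1)
                        + Rmax 1 (Rpower (/ 2) (p - 1)) * Rpower (1 - s) (q - 1).
Proof.
  intros Hs. unfold beta_density.
  assert (P1 := Rpower_pos s (p - 1)). assert (P2 := Rpower_pos (1 - s) (q - 1)).
  assert (M1 := Rmax_l 1 (Rpower (/ 2) (q - 1))). assert (M2 := Rmax_l 1 (Rpower (/ 2) (p - 1))).
  destruct (Rle_lt_dec s (/ 2)).
  - assert (Rpower (1 - s) (q - 1) <= Rmax 1 (Rpower (/ 2) (q - 1)))
      by (apply Rpower_le_on_half; lra).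
    nra.
  - assert (Rpower s (p - 1) <= Rmax 1 (Rpower (/ 2) (p - 1))) by (apply Rpower_le_on_half; lra).
    nra.
Qed.

Lemma beta_density_partial_le p q x y (pr : Riemann_integrable (beta_density p q) x y) :
  0 < p -> 0 < q -> 0 < x -> x <= y -> y < 1 ->
  RiemannInt pr <= Rmax 1 (Rpower (/ 2) (q - 1)) / p + Rmax 1 (Rpower (/ 2) (p - 1)) / q.
Proof.
  intros Hp Hq Hx Hxy Hy.
  set (K2 := Rmax 1 (Rpower (/ 2) (q - 1))). set (K1 := Rmax 1 (Rpower (/ 2) (p - 1))).
  assert (I1 := is_RInt_Rpower p x y Hp Hx Hxy).
  assert (I2 := is_RInt_Rpower_compl q x y Hq Hxy Hy).
  assert (I := is_RInt_plus _ _ _ _ _ _ (is_RInt_scal _ _ _ K2 _ I1) (is_RInt_scal _ _ _ K1 _ I2)).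
  rewrite <- (RInt_Reals _ _ _ pr).
  eapply Rle_trans.
  - apply (RInt_le _ _ _ _ Hxy (ex_RInt_Reals_1 _ _ _ pr) (ex_intro _ _ I)).
    intros s Hs. apply beta_density_le; lra.
  - rewrite (is_RInt_unique _ _ _ _ I). unfold plus, scal; simpl; unfold mult; simpl.
    assert (Rpower y p <= 1) by (apply Rpower_le_1; lra).
    assert (Rpower (1 - x) q <= 1) by (apply Rpower_le_1; lra).
    assert (0 < Rpower x p) by apply Rpower_pos.
    assert (0 < Rpower (1 - y) q) by apply Rpower_pos.
    assert (0 < / p) by (apply Rinv_0_lt_compat; lra).
    assert (0 < / q) by (apply Rinv_0_lt_compat; lra).
    assert (1 <= K1) by apply Rmax_l. assert (1 <= K2) by apply Rmax_l.
    assert (/ p * Rpower y p - / p * Rpower x p <= / p) by nra.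
    assert (/ q * Rpower (1 - x) q - / q * Rpower (1 - y) q <= / q) by nra.
    unfold Rdiv. apply Rplus_le_compat; apply Rmult_le_compat_l; lra.
Qed.

Lemma Beta_imp_int p q : 0 < p -> 0 < q -> imp_int_ab (beta_density p q) 0 1 (Beta p q).
Proof.
  intros Hp Hq. unfold Beta. apply epsilon_spec.
  destruct (imp_int_ab_of_bounded (beta_density p q) 0 1
     (Rmax 1 (Rpower (/ 2) (q - 1)) / p + Rmax 1 (Rpower (/ 2) (p - 1)) / q)) as [l [Hl _]].
  - lra.
  - intros x y Hx Hxy Hy.
    apply bounded_variation_integrable; auto. apply beta_density_bounded_variation; auto.
  - intros x Hx. left; apply beta_density_pos.
  - intros x y pr Hx Hxy Hy. apply beta_density_partial_le; auto.
  - exists l; exact Hl.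
Qed.

Lemma Beta_partial_le p q x y (pr : Riemann_integrable (beta_density p q) x y) :
  0 < p -> 0 < q -> 0 < x -> x <= y -> y < 1 -> RiemannInt pr <= Beta p q.
Proof.
  intros Hp Hq Hx Hxy Hy. apply (imp_int_ab_partial_le (beta_density p q) 0 1); auto.
  - intros z _. left; apply beta_density_pos.
  - apply Beta_imp_int; auto.
Qed.

Definition conv_kernel (a b t u : R) : R := Rpower u (a - 1) * Rpower (t - u) (b - 1).

Lemma conv_kernel_rescale a b t u : 0 < u < t ->
  conv_kernel a b t u = Rpower t (a + b - 2) * beta_density b a ((t - u) / t).
Proof.
  intros Hu. unfold conv_kernel, beta_density.
  replace (1 - (t - u) / t) with (u * / t) by (field; lra). unfold Rdiv, Rpower.
  rewrite !ln_mult, !ln_Rinv by (try apply Rinv_0_lt_compat; lra).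
  rewrite <- !exp_plus. f_equal. ring.
Qed.

(** The substitution [u = t - t s] turns the kernel into a rescaled Beta density. *)
Lemma is_RInt_conv_kernel a b t x y : 0 < x -> x <= y -> y < t ->
  ex_RInt (beta_density b a) ((t - y) / t) ((t - x) / t) ->
  is_RInt (conv_kernel a b t) x y
    (Rpower t (a + b - 1) * RInt (beta_density b a) ((t - y) / t) ((t - x) / t)).
Proof.
  intros Hx Hxy Hy [I HI].
  rewrite (is_RInt_unique _ _ _ _ HI).
  apply is_RInt_swap in HI.
  replace ((t - y) / t) with (- / t * y + 1) in HI by (field; lra).
  replace ((t - x) / t) with (- / t * x + 1) in HI by (field; lra).
  apply (is_RInt_comp_lin (beta_density b a) (- / t) 1 x y) in HI.
  apply (is_RInt_scal _ _ _ (- Rpower t (a + b - 1))) in HI.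
  replace (scal (- Rpower t (a + b - 1)) (opp I)) with (Rpower t (a + b - 1) * I) in HI
    by (unfold scal, opp; simpl; unfold mult; simpl; ring).
  refine (is_RInt_ext _ _ _ _ _ _ HI).
  rewrite Rmin_left, Rmax_right by lra. intros u Hu.
  rewrite conv_kernel_rescale by lra.
  unfold scal; simpl; unfold mult; simpl.
  replace (- / t * u + 1) with ((t - u) / t) by (field; lra).
  replace (a + b - 1) with ((a + b - 2) + 1) by ring. rewrite Rpower_plus, Rpower_1 by lra.
  field; lra.
Qed.

Lemma conv_imp_int_le f t a b K : 0 < t -> 0 < a -> 0 < b -> 0 <= K ->
  (forall x y, 0 < x -> x <= y -> y < t -> has_bounded_variation f x y) ->
  (forall u, 0 < u < t -> 0 <= f u <= K * conv_kernel a b t u) ->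
  exists l, imp_int_ab f 0 t l /\ l <= K * Rpower t (a + b - 1) * Beta b a.
Proof.
  intros Ht Ha Hb HK Hbv Hf.
  apply imp_int_ab_of_bounded; [exact Ht| | |].
  - intros x y Hx Hxy Hy. apply bounded_variation_integrable; auto.
  - intros u Hu. apply Hf; auto.
  - intros x y pr Hx Hxy Hy.
    assert (Hx' : 0 < (t - y) / t) by (apply Rdiv_lt_0_compat; lra).
    assert (Hxy' : (t - y) / t <= (t - x) / t)
      by (apply Rmult_le_compat_r; [left; apply Rinv_0_lt_compat|]; lra).
    assert (Hy' : (t - x) / t < 1) by (apply Rmult_lt_reg_r with t; [lra|]; field_simplify; lra).
    destruct (bounded_variation_integrable (beta_density b a) _ _ Hxy'
      (beta_density_bounded_variation b a _ _ Hx' Hxy' Hy')) as [prB].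
    assert (IK := is_RInt_conv_kernel a b t x y Hx Hxy Hy (ex_RInt_Reals_1 _ _ _ prB)).
    assert (prK := ex_RInt_Reals_0 _ _ _ (ex_intro _ _ IK)).
    assert (E := RInt_Reals _ _ _ prK).
    rewrite (is_RInt_unique _ _ _ _ IK), (RInt_Reals _ _ _ prB) in E.
    assert (B := Beta_partial_le b a _ _ prB Hb Ha Hx' Hxy' Hy').
    assert (P := Rpower_pos t (a + b - 1)).
    eapply Rle_trans.
    { apply (RiemannInt_le_scal _ _ _ _ K pr prK Hxy). intros u Hu; apply Hf; lra. }
    rewrite Rmult_assoc, <- E. apply Rmult_le_compat_l; [exact HK|].
    apply Rmult_le_compat_l; lra.
Qed.

(** * The function [h] and its inverse *)

Definition h_integrand (d : nat) (nu : R -> R) (r s : R) : R :=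
  Rmin 1 (s ^ 2 / r ^ 2) * nu s * s ^ (pred d).

Definition h_radial (d : nat) (nu : R -> R) (r : R) : R :=
  epsilon (inhabits 0) (fun l => imp_int_0inf (h_integrand d nu r) l).

Lemma hfun_radial d nu r : hfun d nu r = sphere_area d * h_radial d nu r.
Proof. reflexivity. Qed.

Lemma ball_vol_pos k : 0 < ball_vol k.
Proof.
  enough (H : 0 < ball_vol k /\ 0 < ball_vol (S k)) by apply H.
  induction k as [|k [IH1 IH2]]; [simpl; lra|].
  split; [exact IH2|]. change (ball_vol (S (S k))) with (2 * PI / INR (S (S k)) * ball_vol k).
  assert (PI_RGT_0 := PI_RGT_0). assert (0 < INR (S (S k))) by (apply lt_0_INR; lia).
  apply Rmult_lt_0_compat; [apply Rdiv_lt_0_compat|]; lra.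
Qed.

Lemma sphere_area_pos d : (0 < d)%nat -> 0 < sphere_area d.
Proof. intros Hd. apply Rmult_lt_0_compat; [apply lt_0_INR; exact Hd | apply ball_vol_pos]. Qed.

Section LevyFunction.

Variables (d : nat) (nu : R -> R).
Hypothesis d_pos : (0 < d)%nat.
Hypothesis nu_nonneg : forall s, 0 < s -> 0 <= nu s.
Hypothesis nu_nonincreasing : forall s1 s2, 0 < s1 -> s1 <= s2 -> nu s2 <= nu s1.
Hypothesis nu_integrable : exists l, imp_int_0inf (fun s => Rmin 1 (s ^ 2) * nu s * s ^ (pred d)) l.
Hypothesis hfun_blowup : forall M, exists del, 0 < del /\
  forall r, 0 < r -> r < del -> M < hfun d nu r.

Let g := h_integrand d nu.

Lemma weight_nonneg s : 0 < s -> 0 <= nu s * s ^ pred d.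
Proof. intros Hs. apply Rmult_le_pos; [apply nu_nonneg; exact Hs | apply pow_le; lra]. Qed.

Lemma h_integrand_nonneg r s : 0 < r -> 0 < s -> 0 <= g r s.
Proof.
  intros Hr Hs. unfold g, h_integrand. rewrite Rmult_assoc.
  apply Rmult_le_pos; [|apply weight_nonneg; auto].
  apply Rmin_glb; [lra|]. apply Rdiv_le_0_compat; [apply pow_le | apply pow_lt]; lra.
Qed.

Lemma h_integrand_antitone r r' s : 0 < r -> r <= r' -> 0 < s -> g r' s <= g r s.
Proof.
  intros Hr Hrr Hs. unfold g, h_integrand. rewrite !Rmult_assoc.
  apply Rmult_le_compat_r; [apply weight_nonneg; auto|].
  apply Rle_min_compat_l. unfold Rdiv. apply Rmult_le_compat_l; [apply pow_le; lra|].
  apply Rinv_le_contravar; [apply pow_lt; lra | apply pow_incr; lra].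
Qed.

Lemma h_integrand_scale r r' s : 0 < r -> r <= r' -> 0 < s -> g r s <= (r' / r) ^ 2 * g r' s.
Proof.
  intros Hr Hrr Hs. unfold g, h_integrand. rewrite !Rmult_assoc, <- (Rmult_assoc ((r' / r) ^ 2)).
  apply Rmult_le_compat_r; [apply weight_nonneg; auto|].
  assert (Hk : 1 <= (r' / r) ^ 2).
  { assert (1 <= r' / r) by (apply Rmult_le_reg_r with r; [lra|]; field_simplify; lra). nra. }
  assert (0 <= s ^ 2 / r' ^ 2) by (apply Rdiv_le_0_compat; [apply pow_le | apply pow_lt]; lra).
  replace (s ^ 2 / r ^ 2) with ((r' / r) ^ 2 * (s ^ 2 / r' ^ 2)) by (field; lra).
  unfold Rmin at 2. destruct (Rle_dec 1 (s ^ 2 / r' ^ 2)).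
  - eapply Rle_trans; [apply Rmin_l|]. lra.
  - apply Rmin_r.
Qed.

Lemma h_integrand_bounded_variation r x y :
  0 < r -> 0 < x -> x <= y -> has_bounded_variation (g r) x y.
Proof.
  intros Hr Hx Hxy. unfold g, h_integrand.
  apply bounded_variation_mult; [exact Hxy| apply bounded_variation_mult; [exact Hxy | |] |].
  - apply nondecreasing_bounded_variation. intros s u Hs Hsu Hu.
    apply Rle_min_compat_l. unfold Rdiv. apply Rmult_le_compat_r.
    + left; apply Rinv_0_lt_compat, pow_lt; lra.
    + apply pow_incr; lra.
  - exists (fun x => - nu x). intros s u Hs Hsu Hu.
    assert (nu u <= nu s) by (apply nu_nonincreasing; lra). rewrite Rabs_left1; lra.
  - apply nondecreasing_bounded_variation. intros s u Hs Hsu Hu. apply pow_incr; lra.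
Qed.


Lemma h_integrand_1_imp_int : exists l, imp_int_0inf (g 1) l.
Proof.
  replace (g 1) with (fun s => Rmin 1 (s ^ 2) * nu s * s ^ (pred d)); [exact nu_integrable|].
  apply functional_extensionality. intros s. unfold g, h_integrand. do 3 f_equal. field.
Qed.

Lemma h_integrand_le_1 r s : 0 < r -> 0 < s -> g r s <= Rmax 1 ((1 / r) ^ 2) * g 1 s.
Proof.
  intros Hr Hs. assert (N := h_integrand_nonneg 1 s ltac:(lra) Hs).
  destruct (Rle_lt_dec 1 r).
  - eapply Rle_trans; [apply (h_integrand_antitone 1 r s); lra|].
    assert (1 <= Rmax 1 ((1 / r) ^ 2)) by apply Rmax_l. nra.
  - eapply Rle_trans; [apply (h_integrand_scale r 1); auto; lra|].
    apply Rmult_le_compat_r; [exact N | apply Rmax_r].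
Qed.

Lemma h_integrand_le_near r A s : 0 < r -> 1 <= A -> 0 < s <= A -> g r s <= (A / r) ^ 2 * g 1 s.
Proof.
  intros Hr HA Hs. unfold g, h_integrand. rewrite !Rmult_assoc, <- (Rmult_assoc ((A / r) ^ 2)).
  apply Rmult_le_compat_r; [apply weight_nonneg; lra|].
  assert (s ^ 2 <= A ^ 2) by (apply pow_incr; lra).
  assert (0 < r ^ 2) by (apply pow_lt; lra).
  eapply Rle_trans; [apply Rmin_r|].
  replace (s ^ 2 / 1 ^ 2) with (s ^ 2) by field.
  replace ((A / r) ^ 2) with (A ^ 2 / r ^ 2) by (field; lra).
  assert (0 <= s ^ 2 / r ^ 2) by (apply Rdiv_le_0_compat; [apply pow_le|]; lra).
  unfold Rmin. destruct (Rle_dec 1 (s ^ 2)).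
  - rewrite Rmult_1_r. apply Rmult_le_compat_r; [left; apply Rinv_0_lt_compat|]; lra.
  - replace (A ^ 2 / r ^ 2 * s ^ 2) with (s ^ 2 / r ^ 2 * A ^ 2) by (field; lra).
    assert (1 <= A ^ 2) by nra. nra.
Qed.

Lemma h_radial_imp_int r : 0 < r -> imp_int_0inf (g r) (h_radial d nu r).
Proof.
  intros Hr. unfold h_radial. apply epsilon_spec.
  destruct h_integrand_1_imp_int as [L1 HL1].
  assert (Hc : 0 <= Rmax 1 ((1 / r) ^ 2)) by (eapply Rle_trans; [|apply Rmax_l]; lra).
  destruct (imp_int_0inf_of_bounded (g r) (Rmax 1 ((1 / r) ^ 2) * L1)) as [l [Hl _]].
  - intros x y Hx Hxy. apply bounded_variation_integrable; auto.
    apply h_integrand_bounded_variation; auto.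
  - intros s Hs. apply h_integrand_nonneg; auto.
  - apply (imp_int_0inf_partial_le_scal _ (g 1)); auto.
    + intros s Hs. apply h_integrand_le_1; auto.
    + intros s Hs. apply h_integrand_nonneg; auto; lra.
  - exists l; exact Hl.
Qed.

Lemma hfun_nonneg r : 0 < r -> 0 <= hfun d nu r.
Proof.
  intros Hr. rewrite hfun_radial. apply Rmult_le_pos; [left; apply sphere_area_pos; exact d_pos|].
  apply (imp_int_0inf_ge0 (g r)); [intros; apply h_integrand_nonneg; auto|].
  apply h_radial_imp_int; auto.
Qed.

Lemma hfun_antitone r r' : 0 < r -> r <= r' -> hfun d nu r' <= hfun d nu r.
Proof.
  intros Hr Hrr. rewrite !hfun_radial.
  apply Rmult_le_compat_l; [left; apply sphere_area_pos; exact d_pos|].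
  rewrite <- (Rmult_1_l (h_radial d nu r)).
  apply (imp_int_0inf_le_scal (g r') (g r)); try lra.
  - intros s Hs. rewrite Rmult_1_l. apply h_integrand_antitone; auto.
  - intros s Hs. apply h_integrand_nonneg; auto.
  - apply h_radial_imp_int; lra.
  - apply h_radial_imp_int; lra.
Qed.

Lemma hfun_scale r r' : 0 < r -> r <= r' -> (r / r') ^ 2 * hfun d nu r <= hfun d nu r'.
Proof.
  intros Hr Hrr. rewrite !hfun_radial.
  assert (X : h_radial d nu r <= (r' / r) ^ 2 * h_radial d nu r').
  { apply (imp_int_0inf_le_scal (g r) (g r')).
    - apply pow_le, Rdiv_le_0_compat; lra.
    - intros s Hs. apply h_integrand_scale; auto.
    - intros s Hs. apply h_integrand_nonneg; auto; lra.
    - apply h_radial_imp_int; lra.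
    - apply h_radial_imp_int; lra. }
  assert (S := sphere_area_pos d d_pos).
  replace (h_radial d nu r') with ((r / r') ^ 2 * ((r' / r) ^ 2 * h_radial d nu r'))
    by (field; lra).
  assert (0 <= (r / r') ^ 2) by (apply pow_le, Rdiv_le_0_compat; lra).
  assert ((r / r') ^ 2 * h_radial d nu r <= (r / r') ^ 2 * ((r' / r) ^ 2 * h_radial d nu r'))
    by (apply Rmult_le_compat_l; auto).
  nra.
Qed.

(** Below [A] the integrand is at most [(A/r)^2] times the one for [r = 1]; above [A >= 1] it
    is at most that one, whose tail beyond [A] is small. *)
Lemma h_integrand_partial_le r A L1 eps x y (pr : Riemann_integrable (g r) x y) :
  1 <= A -> A <= r -> imp_int_0inf (g 1) L1 ->
  (forall Y (q : Riemann_integrable (g 1) A Y), A <= Y -> RiemannInt q < eps) ->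
  0 < x -> x <= y -> RiemannInt pr <= (A / r) ^ 2 * L1 + eps.
Proof.
  intros HA Hr HL1 Htail Hx Hxy.
  set (X := Rmin x A). set (Y := Rmax y A).
  assert (X1 : X <= x) by apply Rmin_l. assert (X2 : X <= A) by apply Rmin_r.
  assert (X3 : 0 < X) by (apply Rmin_pos; lra).
  assert (Y1 : y <= Y) by apply Rmax_l. assert (Y2 : A <= Y) by apply Rmax_r.
  assert (RI : forall a b, 0 < a -> a <= b -> inhabited (Riemann_integrable (g r) a b)).
  { intros a b Ha Hab. apply bounded_variation_integrable; auto.
    apply h_integrand_bounded_variation; lra. }
  destruct (RI X A X3 X2) as [pXA]. destruct (RI A Y ltac:(lra) Y2) as [pAY].
  destruct (proj1 HL1 X A X3 X2) as [qXA]. destruct (proj1 HL1 A Y ltac:(lra) Y2) as [qAY].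
  assert (E := RiemannInt_P26 pXA pAY (RiemannInt_P24 pXA pAY)).
  assert (W : RiemannInt pr <= RiemannInt (RiemannInt_P24 pXA pAY)).
  { apply RiemannInt_le_enlarge; try lra; try (apply RI; lra).
    intros; apply h_integrand_nonneg; lra. }
  assert (S1 : RiemannInt pXA <= (A / r) ^ 2 * RiemannInt qXA).
  { apply RiemannInt_le_scal; [lra|]. intros s Hs. apply h_integrand_le_near; lra. }
  assert (S2 : RiemannInt qXA <= L1).
  { apply (imp_int_0inf_partial_le (g 1)); auto. intros; apply h_integrand_nonneg; lra. }
  assert (S3 : RiemannInt pAY <= 1 * RiemannInt qAY).
  { apply RiemannInt_le_scal; [lra|]. intros s Hs. rewrite Rmult_1_l.
    apply h_integrand_antitone; lra. }
  assert (S4 := Htail Y qAY Y2).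
  assert ((A / r) ^ 2 * RiemannInt qXA <= (A / r) ^ 2 * L1)
    by (apply Rmult_le_compat_l; [apply pow_le, Rdiv_le_0_compat|]; lra).
  lra.
Qed.

Lemma h_radial_small eps : 0 < eps -> exists r, 0 < r /\ h_radial d nu r <= 2 * eps.
Proof.
  intros Heps. destruct h_integrand_1_imp_int as [L1 HL1].
  assert (Hg1 : forall s, 0 < s -> 0 <= g 1 s) by (intros; apply h_integrand_nonneg; lra).
  assert (HL0 := imp_int_0inf_ge0 _ _ Hg1 HL1).
  destruct (imp_int_0inf_tail _ _ Hg1 HL1 eps Heps) as [M HM].
  set (A := Rmax 1 (M + 1)). assert (HA1 : 1 <= A) by apply Rmax_l.
  assert (HA2 : M + 1 <= A) by apply Rmax_r.
  set (r := A * (1 + L1 / eps)).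
  assert (HLe : 0 <= L1 / eps) by (apply Rdiv_le_0_compat; lra).
  assert (Hr : A <= r) by (unfold r; nra).
  assert (Hsmall : (A / r) ^ 2 * L1 <= eps).
  { replace ((A / r) ^ 2 * L1) with (eps * (L1 / eps) / (1 + L1 / eps) ^ 2)
      by (unfold r; field; lra).
    apply Rmult_le_reg_r with ((1 + L1 / eps) ^ 2); [nra|].
    replace (eps * (L1 / eps) / (1 + L1 / eps) ^ 2 * (1 + L1 / eps) ^ 2) with (eps * (L1 / eps))
      by (field; lra).
    apply Rmult_le_compat_l; [lra | nra]. }
  exists r. split; [lra|].
  apply (imp_int_0inf_le_of_partial_le (g r)); [apply h_radial_imp_int; lra|].
  intros x y pr Hx Hxy.
  assert (X := h_integrand_partial_le r A L1 eps x y pr HA1 Hr HL1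
                 (fun Y q HY => HM A Y q ltac:(lra) HY) Hx Hxy).
  lra.
Qed.

Lemma hfun_small y : 0 < y -> exists r, 0 < r /\ hfun d nu r < y.
Proof.
  intros Hy. assert (S := sphere_area_pos d d_pos).
  destruct (h_radial_small (y / (4 * sphere_area d))) as [r [Hr Hsmall]].
  { apply Rdiv_lt_0_compat; lra. }
  exists r. split; [exact Hr|]. rewrite hfun_radial.
  apply Rle_lt_trans with (sphere_area d * (2 * (y / (4 * sphere_area d)))).
  - apply Rmult_le_compat_l; lra.
  - replace (sphere_area d * (2 * (y / (4 * sphere_area d)))) with (y / 2) by (field; lra). lra.
Qed.

Lemma hfun_lipschitz r1 r r' R : 0 < r1 -> r1 <= r -> r <= r' -> r' <= R ->
  hfun d nu r - hfun d nu r' <= 2 * R / r1 ^ 2 * hfun d nu r1 * (r' - r).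
Proof.
  intros H1 H2 H3 H4.
  assert (X := hfun_scale r r' ltac:(lra) H3).
  assert (M := hfun_antitone r1 r H1 H2).
  assert (N := hfun_nonneg r ltac:(lra)).
  assert (Q : (r' + r) / r' ^ 2 <= 2 * R / r1 ^ 2).
  { unfold Rdiv. apply Rmult_le_compat; [lra | left; apply Rinv_0_lt_compat, pow_lt; lra | lra |].
    apply Rinv_le_contravar; [apply pow_lt; lra | apply pow_incr; lra]. }
  assert (Q2 : 0 <= (r' + r) / r' ^ 2) by (apply Rdiv_le_0_compat; [|apply pow_lt]; lra).
  assert (hfun d nu r * ((r' - r) * ((r' + r) / r' ^ 2))
          <= hfun d nu r1 * ((r' - r) * (2 * R / r1 ^ 2))).
  { apply Rmult_le_compat; auto; [apply Rmult_le_pos; lra | apply Rmult_le_compat_l; lra]. }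
  replace (hfun d nu r)
    with ((r / r') ^ 2 * hfun d nu r + hfun d nu r * ((r' - r) * ((r' + r) / r' ^ 2)))
    at 1 by (field; lra).
  lra.
Qed.

Lemma hfun_continuous r : 0 < r -> continuity_pt (hfun d nu) r.
Proof.
  intros Hr. set (K := 2 * (2 * r) / (r / 2) ^ 2 * hfun d nu (r / 2)).
  apply (continuity_pt_local_lipschitz _ r (r / 2) K); [lra| |].
  - apply Rmult_le_pos; [apply Rdiv_le_0_compat; [|apply pow_lt]; lra | apply hfun_nonneg; lra].
  - intros x Hx. apply Rabs_def2 in Hx. destruct (Rle_lt_dec x r).
    + assert (L := hfun_lipschitz (r / 2) x r (2 * r) ltac:(lra) ltac:(lra) ltac:(lra) ltac:(lra)).
      assert (A := hfun_antitone x r ltac:(lra) ltac:(lra)).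
      rewrite Rabs_pos_eq, Rabs_left1 by lra. fold K in L. lra.
    + assert (L := hfun_lipschitz (r / 2) r x (2 * r) ltac:(lra) ltac:(lra) ltac:(lra) ltac:(lra)).
      assert (A := hfun_antitone r x ltac:(lra) ltac:(lra)).
      rewrite Rabs_left1, Rabs_pos_eq by lra. fold K in L. lra.
Qed.

Lemma hfun_surjective y : 0 < y -> exists r, 0 < r /\ hfun d nu r = y.
Proof.
  intros Hy.
  destruct (hfun_blowup y) as [del [Hdel Hbig]].
  assert (Hh1 : y < hfun d nu (del / 2)) by (apply Hbig; lra).
  destruct (hfun_small y Hy) as [R [HR HhR]].
  assert (Hlt : del / 2 < R).
  { apply Rnot_le_lt. intros Hle. assert (X := hfun_antitone R (del / 2) HR Hle). lra. }
  destruct (IVT_interv (fun r => y - hfun d nu r) (del / 2) R) as [z [Hz Hfz]].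
  - intros a Ha. apply continuity_pt_minus; [apply continuity_pt_const; intros ? ?; reflexivity|].
    apply hfun_continuous; lra.
  - exact Hlt.
  - lra.
  - lra.
  - exists z. split; lra.
Qed.

Lemma hinv_spec y : 0 < y -> 0 < hinv d nu y /\ hfun d nu (hinv d nu y) = y.
Proof. intros Hy. unfold hinv. apply epsilon_spec, hfun_surjective, Hy. Qed.

Lemma hinv_antitone y y' : 0 < y' -> y' <= y -> hinv d nu y <= hinv d nu y'.
Proof.
  intros Hy' Hyy.
  destruct (hinv_spec y ltac:(lra)) as [A1 A2]. destruct (hinv_spec y' Hy') as [B1 B2].
  apply Rnot_lt_le. intros Hc.
  assert (X := hfun_antitone (hinv d nu y') (hinv d nu y) B1 ltac:(lra)).
  rewrite A2, B2 in X. assert (y = y') by lra. subst. lra.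
Qed.

Let hr (v : R) : R := hinv d nu (1 / v).

Lemma hr_spec v : 0 < v -> 0 < hr v /\ hfun d nu (hr v) = 1 / v.
Proof. intros Hv. apply hinv_spec, Rdiv_lt_0_compat; lra. Qed.

Lemma hr_monotone u t : 0 < u -> u <= t -> hr u <= hr t.
Proof.
  intros Hu Hut. apply hinv_antitone; [apply Rdiv_lt_0_compat; lra|].
  unfold Rdiv; rewrite !Rmult_1_l; apply Rinv_le_contravar; lra.
Qed.

Lemma ln_hr_upper u t : 0 < u -> u <= t -> 2 * ln (hr u) <= 2 * ln (hr t) + ln u - ln t.
Proof.
  intros Hu Hut.
  destruct (hr_spec u Hu) as [A1 A2]. destruct (hr_spec t ltac:(lra)) as [B1 B2].
  assert (X := hfun_scale (hr u) (hr t) A1 (hr_monotone u t Hu Hut)). rewrite A2, B2 in X.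
  assert (Y : hr u * hr u * t <= hr t * hr t * u).
  { apply Rmult_le_compat_r with (r := hr t * hr t * u * t) in X; [|apply Rmult_le_pos; nra].
    replace ((hr u / hr t) ^ 2 * (1 / u) * (hr t * hr t * u * t)) with (hr u * hr u * t) in X
      by (field; lra).
    replace (1 / t * (hr t * hr t * u * t)) with (hr t * hr t * u) in X by (field; lra).
    exact X. }
  apply ln_le in Y; [|apply Rmult_lt_0_compat; [apply Rmult_lt_0_compat|]; lra].
  rewrite !ln_mult in Y by (try apply Rmult_lt_0_compat; lra). lra.
Qed.

Lemma conv_integrand_bounded_variation theta eta gam bet t x y : 0 < x -> x <= y -> y < t ->
  has_bounded_variation (conv_integrand d nu theta eta gam bet t) x y.
Proof.
  intros Hx Hxy Hy. unfold conv_integrand.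
  assert (Hpos : forall u, x <= u <= y -> 0 < hr u /\ 0 < hr (t - u))
    by (intros u Hu; split; apply hr_spec; lra).
  repeat apply bounded_variation_mult; auto.
  - apply (Rpower_nondecreasing_bounded_variation (fun u => u)); [intros; lra|].
    intros s u Hs Hsu Hu; lra.
  - apply (Rpower_nondecreasing_bounded_variation hr); [intros u Hu; apply (Hpos u Hu)|].
    intros s u Hs Hsu Hu. apply hr_monotone; lra.
  - apply (Rpower_nonincreasing_bounded_variation (fun u => t - u)); [intros; lra|].
    intros s u Hs Hsu Hu; lra.
  - apply (Rpower_nonincreasing_bounded_variation (fun u => hr (t - u)));
      [intros u Hu; apply (Hpos u Hu)|].
    intros s u Hs Hsu Hu. assert (hr (t - u) <= hr (t - s)) by (apply hr_monotone; lra). lra.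
Qed.

Lemma conv_integrand_pos theta eta gam bet t u : 0 < conv_integrand d nu theta eta gam bet t u.
Proof. unfold conv_integrand. repeat apply Rmult_lt_0_compat; apply Rpower_pos. Qed.

Lemma conv_integrand_le_kernel theta eta gam bet t u : 0 <= gam -> 0 <= bet -> 0 < u < t ->
  conv_integrand d nu theta eta gam bet t u <=
  Rpower (hr t) (gam + bet) * Rpower t (- ((gam + bet) / 2)) *
  conv_kernel (gam / 2 + 1 - eta) (bet / 2 + 1 - theta) t u.
Proof.
  intros Hg Hb Hu.
  assert (U1 := ln_hr_upper u t ltac:(lra) ltac:(lra)).
  assert (U2 := ln_hr_upper (t - u) t ltac:(lra) ltac:(lra)).
  apply Rmult_le_compat_l with (r := gam) in U1; [|exact Hg].
  apply Rmult_le_compat_l with (r := bet) in U2; [|exact Hb].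
  unfold conv_integrand, conv_kernel, Rpower. rewrite <- !exp_plus. fold (hr u) (hr (t - u)).
  apply exp_le_exp. lra.
Qed.

Lemma conv_estimate theta eta gam bet t :
  0 < t -> 0 <= bet -> 0 <= gam -> bet / 2 + 1 - theta > 0 -> gam / 2 + 1 - eta > 0 ->
  exists l, imp_int_ab (conv_integrand d nu theta eta gam bet t) 0 t l /\
    l <= Beta (bet / 2 + 1 - theta) (gam / 2 + 1 - eta) * Rpower t (1 - eta - theta)
         * Rpower (hr t) (gam + bet).
Proof.
  intros Ht Hb Hg Hb2 Hg2.
  destruct (conv_imp_int_le (conv_integrand d nu theta eta gam bet t) t
     (gam / 2 + 1 - eta) (bet / 2 + 1 - theta)
     (Rpower (hr t) (gam + bet) * Rpower t (- ((gam + bet) / 2)))) as [l [Hl Hle]]; try lra.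
  - left; apply Rmult_lt_0_compat; apply Rpower_pos.
  - intros x y Hx Hxy Hy. apply conv_integrand_bounded_variation; auto.
  - intros u Hu. split; [left; apply conv_integrand_pos | apply conv_integrand_le_kernel; auto].
  - exists l. split; [exact Hl|]. eapply Rle_trans; [exact Hle|]. right.
    rewrite (Rmult_assoc (Rpower (hr t) _)), <- Rpower_plus.
    replace (- ((gam + bet) / 2) + (gam / 2 + 1 - eta + (bet / 2 + 1 - theta) - 1))
      with (1 - eta - theta) by field.
    ring.
Qed.

Section WeakScaling.

Variables (alpha Ch : R).
Hypothesis alpha_pos : 0 < alpha.
Hypothesis alpha_le_2 : alpha <= 2.
Hypothesis Ch_ge_1 : 1 <= Ch.
Hypothesis hfun_scaling : forall lam r, 0 < lam -> lam <= 1 -> 0 < r -> r <= 1 ->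
  hfun d nu r <= Ch * Rpower lam alpha * hfun d nu (lam * r).

(** Scaling applies only below radius [1]; above it the plain monotonicity of [h] and the
    bound [hr t <= Rmax (hr T) 1] cost the factor [Rmax (hr T) 1 ^ 2]. *)
Lemma ln_hr_lower T v t : 0 < v -> v <= t -> t <= T ->
  alpha * ln (hr t) + ln v - ln t - ln (Ch * Rmax (hr T) 1 ^ 2) <= alpha * ln (hr v).
Proof.
  intros Hv Hvt HtT.
  destruct (hr_spec v Hv) as [A1 A2]. destruct (hr_spec t ltac:(lra)) as [B1 B2].
  assert (Hrho := hr_monotone v t Hv Hvt). assert (HrT := hr_monotone t T ltac:(lra) HtT).
  set (R := Rmax (hr T) 1) in *.
  assert (HR1 : 1 <= R) by apply Rmax_r. assert (HR2 : hr T <= R) by apply Rmax_l.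
  replace (ln (Ch * R ^ 2)) with (ln Ch + 2 * ln R)
    by (rewrite ln_mult, <- Rpower_pow, ln_Rpower by (try apply pow_lt; lra); simpl; ring).
  assert (LCh : 0 <= ln Ch) by (rewrite <- ln_1; apply ln_le; lra).
  assert (LrR : ln (hr t) <= ln R) by (apply ln_le; lra).
  assert (Lrr : ln (hr v) <= ln (hr t)) by (apply ln_le; lra).
  destruct (Rle_lt_dec (hr t) 1) as [Hr1|Hr1]; [|destruct (Rle_lt_dec 1 (hr v)) as [Hrho1|Hrho1]].
  - assert (X := hfun_scaling (hr v / hr t) (hr t) ltac:(apply Rdiv_lt_0_compat; lra)
                  ltac:(apply Rmult_le_reg_r with (hr t); [lra|]; field_simplify; lra) B1 Hr1).
    replace (hr v / hr t * hr t) with (hr v) in X by (field; lra).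
    rewrite A2, B2 in X. apply ln_le_of_inv_le in X; [|lra..].
    unfold Rdiv in X. rewrite ln_mult, ln_Rinv in X by (try apply Rinv_0_lt_compat; lra).
    assert (0 <= ln R) by (rewrite <- ln_1; apply ln_le; lra). nra.
  - assert (X := hfun_antitone (hr v) (hr t) A1 Hrho). rewrite A2, B2 in X.
    assert (X' := ln_le_of_inv_le t v 1 0 ltac:(lra) Hv ltac:(lra) ltac:(rewrite exp_0; lra)).
    rewrite ln_1 in X'.
    assert (0 <= ln (hr v)) by (rewrite <- ln_1; apply ln_le; lra).
    assert (0 <= ln (hr t)) by (rewrite <- ln_1; apply ln_le; lra). nra.
  - assert (X1 := hfun_antitone 1 (hr t) ltac:(lra) ltac:(lra)).
    assert (X2 := hfun_scaling (hr v) 1 A1 ltac:(lra) ltac:(lra) ltac:(lra)).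
    rewrite Rmult_1_r in X2. rewrite A2, B2 in *.
    assert (X : 1 / t <= Ch * Rpower (hr v) alpha * (1 / v)) by lra.
    apply ln_le_of_inv_le in X; [|lra..].
    assert (0 <= ln (hr t)) by (rewrite <- ln_1; apply ln_le; lra). nra.
Qed.

Lemma conv_integrand_le_kernel_scaling T theta eta gam bet t u : t <= T -> 0 < u < t ->
  conv_integrand d nu theta eta gam bet t u <=
  Rpower (Ch * Rmax (hr T) 1 ^ 2) (- (Rmin bet 0 + Rmin gam 0) / alpha) *
  Rpower (hr t) (gam + bet) *
  Rpower t (- (Rmin (gam / 2) (gam / alpha) + Rmin (bet / 2) (bet / alpha))) *
  conv_kernel (Rmin (gam / 2) (gam / alpha) + 1 - eta)
              (Rmin (bet / 2) (bet / alpha) + 1 - theta) t u.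
Proof.
  intros HtT Hu.
  assert (U1 := ln_hr_upper u t ltac:(lra) ltac:(lra)).
  assert (U2 := ln_hr_upper (t - u) t ltac:(lra) ltac:(lra)).
  assert (L1 := ln_hr_lower T u t ltac:(lra) ltac:(lra) HtT).
  assert (L2 := ln_hr_lower T (t - u) t ltac:(lra) ltac:(lra) HtT).
  set (lC := ln (Ch * Rmax (hr T) 1 ^ 2)) in *.
  assert (G1 := exponent_select alpha gam (ln (hr u)) (ln (hr t)) (ln u - ln t) lC
                  alpha_pos alpha_le_2 ltac:(lra) ltac:(lra)).
  assert (G2 := exponent_select alpha bet (ln (hr (t - u))) (ln (hr t)) (ln (t - u) - ln t) lC
                  alpha_pos alpha_le_2 ltac:(lra) ltac:(lra)).
  unfold conv_integrand, conv_kernel, Rpower. fold lC (hr u) (hr (t - u)).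
  rewrite <- !exp_plus. apply exp_le_exp.
  unfold Rdiv in *. lra.
Qed.

Lemma conv_estimate_scaling T theta eta gam bet t :
  0 < T -> 0 < t -> t <= T ->
  Rmin (bet / 2) (bet / alpha) + 1 - theta > 0 -> Rmin (gam / 2) (gam / alpha) + 1 - eta > 0 ->
  exists l, imp_int_ab (conv_integrand d nu theta eta gam bet t) 0 t l /\
    l <= Rpower (Ch * Rmax (hr T) 1 ^ 2) (- (Rmin bet 0 + Rmin gam 0) / alpha)
         * Beta (Rmin (bet / 2) (bet / alpha) + 1 - theta) (Rmin (gam / 2) (gam / alpha) + 1 - eta)
         * Rpower t (1 - eta - theta) * Rpower (hr t) (gam + bet).
Proof.
  intros HT Ht HtT Hb2 Hg2.
  set (gm := Rmin (gam / 2) (gam / alpha)) in *. set (bm := Rmin (bet / 2) (bet / alpha)) in *.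
  set (C := Rpower (Ch * Rmax (hr T) 1 ^ 2) (- (Rmin bet 0 + Rmin gam 0) / alpha)).
  destruct (conv_imp_int_le (conv_integrand d nu theta eta gam bet t) t
     (gm + 1 - eta) (bm + 1 - theta)
     (C * Rpower (hr t) (gam + bet) * Rpower t (- (gm + bm)))) as [l [Hl Hle]]; try lra.
  - left; repeat apply Rmult_lt_0_compat; apply Rpower_pos.
  - intros x y Hx Hxy Hy. apply conv_integrand_bounded_variation; auto.
  - intros u Hu. split; [left; apply conv_integrand_pos|].
    apply conv_integrand_le_kernel_scaling; auto.
  - exists l. split; [exact Hl|]. eapply Rle_trans; [exact Hle|]. right.
    rewrite (Rmult_assoc (C * _)), <- Rpower_plus.
    replace (- (gm + bm) + (gm + 1 - eta + (bm + 1 - theta) - 1)) with (1 - eta - theta) by ring.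
    ring.
Qed.

End WeakScaling.

End LevyFunction.

Theorem mainTheorem16 :
  forall (d : nat) (nu : R -> R),
    (0 < d)%nat ->
    (forall s, 0 < s -> 0 <= nu s) ->
    (forall s1 s2, 0 < s1 -> s1 <= s2 -> nu s2 <= nu s1) ->
    (exists l, imp_int_0inf (fun s => Rmin 1 (s ^ 2) * nu s * s ^ (pred d)) l) ->
    (forall M, exists del, 0 < del /\
       forall r, 0 < r -> r < del -> M < hfun d nu r) ->
    (* (i) *)
    (forall theta eta gam bet t,
        0 < t -> 0 <= bet -> 0 <= gam ->
        bet / 2 + 1 - theta > 0 -> gam / 2 + 1 - eta > 0 ->
        exists l, imp_int_ab (conv_integrand d nu theta eta gam bet t) 0 t l /\
          l <= Beta (bet / 2 + 1 - theta) (gam / 2 + 1 - eta)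
               * Rpower t (1 - eta - theta)
               * Rpower (hinv d nu (1 / t)) (gam + bet))
    /\
    (* (ii) *)
    (forall alpha Ch,
        0 < alpha -> alpha <= 2 -> 1 <= Ch ->
        (forall lam r, 0 < lam -> lam <= 1 -> 0 < r -> r <= 1 ->
           hfun d nu r <= Ch * Rpower lam alpha * hfun d nu (lam * r)) ->
        forall T theta eta gam bet t,
          0 < T -> 0 < t -> t <= T ->
          Rmin (bet / 2) (bet / alpha) + 1 - theta > 0 ->
          Rmin (gam / 2) (gam / alpha) + 1 - eta > 0 ->
          exists l, imp_int_ab (conv_integrand d nu theta eta gam bet t) 0 t l /\
            l <= Rpower (Ch * (Rmax (hinv d nu (1 / T)) 1) ^ 2)
                        (- (Rmin bet 0 + Rmin gam 0) / alpha)
                 * Beta (Rmin (bet / 2) (bet / alpha) + 1 - theta)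
                        (Rmin (gam / 2) (gam / alpha) + 1 - eta)
                 * Rpower t (1 - eta - theta)
                 * Rpower (hinv d nu (1 / t)) (gam + bet)).
Proof.
  intros d nu Hd Hnu0 Hnu Hint Hblow. split.
  - intros theta eta gam bet t Ht Hb Hg Hb2 Hg2. apply conv_estimate; auto.
  - intros alpha Ch Ha Ha2 HCh Hh T theta eta gam bet t HT Ht HtT Hb2 Hg2.
    apply (conv_estimate_scaling d nu); auto.
Qed.
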